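(* Let $m,\ell$ be positive integers and $r$ an integer. (a) If $r\in[2,2^m)$, then $\rho(t)\le 2^{m-t}$ for every positive integer $t$. (b) If $r\in[2^{m-1},2^m)$ with $r\ge2$, then $\rho(t)\le\min(2^{m-t},\,2^{t+3-m})$ for every positive integer $t$.
   Context: For integers $u$ and $N\ge1$, $\{u\}_N$ denotes the residue of $u$ modulo $N$ in $[-N/2,N/2)$. Let $\beta=2^{m+\ell}\bmod r$, $L=\lfloor2^{m+\ell}/r\rfloor$, and for an integer $j$ let $\alpha_r(j)=\{rj\}_{2^{m+\ell}}$. The probability of a frequency $j\in\{0,\dots,2^{m+\ell}-1\}$ is $$\frac{\beta}{2^{2(m+\ell)}}\Bigl|\sum_{b=0}^{L}e^{i\theta b}\Bigr|^2+\frac{r-\beta}{2^{2(m+\ell)}}\Bigl|\sum_{b=0}^{L-1}e^{i\theta b}\Bigr|^2,\qquad \theta=2\pi\alpha_r(j)/2^{m+\ell}.$$ For a positive integer $t$, $\rho(t)$ is the total probability of those $j\in\{0,\dots,2^{m+\ell}-1\}$ with $|\alpha_r(j)|\in[2^{t-1},2^t)$. *)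

From Stdlib Require Import Reals ZArith.
Open Scope R_scope.

Fixpoint rsum (f : nat -> R) (n : nat) : R :=
  match n with O => 0 | S k => rsum f k + f k end.

(* {u}_N : residue of u modulo N in [-N/2, N/2) (for N >= 1) *)
Definition symmod (u N : Z) : Z :=
  ((u + N / 2) mod N - N / 2)%Z.

Definition Nmod (m l : nat) : Z := (2 ^ Z.of_nat (m + l))%Z.

Definition beta (m l : nat) (r : Z) : Z := (Nmod m l mod r)%Z.
Definition Lq (m l : nat) (r : Z) : Z := (Nmod m l / r)%Z.

Definition alpha (m l : nat) (r j : Z) : Z := symmod (r * j) (Nmod m l).

(* |sum_{b=0}^{n-1} e^{i theta b}|^2, written as (real part)^2 + (imag part)^2 *)
Definition geomsq (theta : R) (n : nat) : R :=
  (rsum (fun b => cos (theta * INR b)) n) ^ 2 +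
  (rsum (fun b => sin (theta * INR b)) n) ^ 2.

Definition prob (m l : nat) (r : Z) (j : nat) : R :=
  let N := IZR (Nmod m l) in
  let theta := 2 * PI * IZR (alpha m l r (Z.of_nat j)) / N in
  let L := Z.to_nat (Lq m l r) in
  IZR (beta m l r) / N ^ 2 * geomsq theta (L + 1) +
  IZR (r - beta m l r) / N ^ 2 * geomsq theta L.

Definition rho (m l : nat) (r : Z) (t : nat) : R :=
  rsum (fun j =>
          let a := Z.abs (alpha m l r (Z.of_nat j)) in
          if andb (Z.leb (2 ^ (Z.of_nat t - 1)) a) (Z.ltb a (2 ^ Z.of_nat t))
          then prob m l r j else 0)
       (Z.to_nat (Nmod m l)).

From Stdlib Require Import Reals ZArith Znumtheory Lra Lia Psatz List.

(* Counting: multiplication by [r] modulo [N = 2^(m+l)] is [g]-to-one onto the multiples of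
   [g = gcd(r, N)], and since [g] is a power of two the band [2^(t-1) <= |alpha_r(j)| < 2^t] contains
   at most [2^t / g] of them, so at most [2^t] frequencies [j] lie in it.
   Size: [|sum_b e^(i theta b)|^2 sin^2(theta/2) <= 1] and Jordan's inequality [sin x >= 2x/pi]
   bound the probability of [j] by [r / (4 alpha_r(j)^2) <= r / 4^t], so [rho(t) <= r / 2^t].
   Trivially the geometric sum is at most [(L+1)^2] and [r (L+1) <= 2N], so every probability is
   at most [4 / r] and [rho(t) <= 2^(t+2) / r]; this is the second bound once [r >= 2^(m-1)]. *)

Lemma length_filter_le_of_inj (n K : nat) (P : nat -> bool) (f : nat -> nat) :
  (forall j, (j < n)%nat -> P j = true -> (f j < K)%nat) ->
  (forall j k, (j < n)%nat -> (k < n)%nat -> P j = true -> P k = true ->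
     f j = f k -> j = k) ->
  (length (filter P (seq 0 n)) <= K)%nat.
Proof.
  intros Hrange Hinj. rewrite <- (length_map f), <- (length_seq K 0).
  apply NoDup_incl_length.
  - apply NoDup_map_NoDup_ForallPairs; [| apply NoDup_filter, seq_NoDup].
    intros x y Hx Hy. rewrite filter_In, in_seq in Hx, Hy.
    destruct Hx, Hy. apply Hinj; auto; lia.
  - intros y Hy. apply in_map_iff in Hy as [x [<- Hx]].
    rewrite filter_In, in_seq in Hx. rewrite in_seq.
    destruct Hx as [Hx HPx]. specialize (Hrange x ltac:(lia) HPx). lia.
Qed.

Open Scope Z_scope.

Lemma symmod_eq u N : N <> 0 -> symmod u N = u - N * ((u + N / 2) / N).
Proof. intros HN. unfold symmod. rewrite Z.mod_eq by exact HN. ring. Qed.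

Lemma symmod_abs_le u N : 0 < N -> Z.abs (symmod u N) <= N / 2.
Proof.
  intros HN. unfold symmod.
  assert (Hmod := Z.mod_pos_bound (u + N / 2) N HN).
  assert (Hhalf := Z.div_mod N 2 ltac:(lia)). assert (Hrem := Z.mod_pos_bound N 2 ltac:(lia)).
  lia.
Qed.

Lemma gcd_pos_r r N : 0 < N -> 0 < Z.gcd r N.
Proof.
  intros HN. assert (0 <= Z.gcd r N) by apply Z.gcd_nonneg.
  assert (Z.gcd r N <> 0) by (rewrite Z.gcd_eq_0; lia). lia.
Qed.

Lemma gcd_divide_symmod_mul r N j : (Z.gcd r N | symmod (r * j) N).
Proof.
  destruct (Z.eq_dec N 0) as [->|HN].
  - unfold symmod. rewrite Zmod_0_r. apply Z.divide_sub_r; [|apply Z.divide_0_r].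
    rewrite Z.add_0_r. apply Z.divide_mul_l, Z.gcd_divide_l.
  - rewrite symmod_eq by exact HN.
    apply Z.divide_sub_r; apply Z.divide_mul_l; [apply Z.gcd_divide_l | apply Z.gcd_divide_r].
Qed.

(* [N | r (j - k)] means [j = k] modulo [N / gcd r N]; equal quotients then force [j = k]. *)
Lemma mul_cong_div_inj r N j k :
  0 < N -> (N | r * j - r * k) ->
  j / (N / Z.gcd r N) = k / (N / Z.gcd r N) -> j = k.
Proof.
  intros HN [z Hz] Hdiv.
  assert (Hg := gcd_pos_r r N HN). set (g := Z.gcd r N) in *.
  destruct (Z.gcd_divide_l r N) as [r' Er]. destruct (Z.gcd_divide_r r N) as [M EN].
  fold g in Er, EN.
  assert (Hcop : Z.gcd r' M = 1).
  { assert (H := Z.gcd_div_gcd r N g ltac:(lia) eq_refl).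
    rewrite Er, EN, !Z.div_mul in H by lia. exact H. }
  assert (HM : 0 < M) by nia.
  rewrite EN, Z.div_mul in Hdiv by lia.
  assert (Hjk : (M | j - k)).
  { apply (Z.gauss _ r'); [|rewrite Z.gcd_comm; exact Hcop].
    exists z. nia. }
  destruct Hjk as [w Hw].
  assert (Ej := Z.div_mod j M ltac:(lia)). assert (Ek := Z.div_mod k M ltac:(lia)).
  assert (Bj := Z.mod_pos_bound j M HM). assert (Bk := Z.mod_pos_bound k M HM).
  assert (w = 0) by nia. lia.
Qed.

Lemma divide_pow2_of_divide (g a : Z) (K : nat) (T : Z) :
  0 < g -> (g | 2 ^ Z.of_nat K) -> (g | a) -> a <> 0 -> 0 <= T -> Z.abs a < 2 ^ (T + 1) ->
  (g | 2 ^ T).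
Proof.
  intros Hg HgK Hga Ha HT Hlt.
  assert (Hle : g <= Z.abs a) by (apply Z.divide_pos_le; [lia | apply Z.divide_abs_r, Hga]).
  destruct (Zpow_facts.Zdivide_power_2 g 2 (Z.of_nat K) ltac:(lia) ltac:(lia) prime_2 HgK)
    as [e ->].
  assert (He : 0 <= e) by (destruct (Z.neg_nonneg_cases e); [rewrite Z.pow_neg_r in Hg|]; lia).
  assert (HeT : e < T + 1) by (apply (Z.pow_lt_mono_r_iff 2); lia).
  exists (2 ^ (T - e)). rewrite <- Z.pow_add_r by lia. f_equal. lia.
Qed.

(* Folds the two halves [A, 2A) and (-2A, -A] of the band onto [0, 2A). *)
Definition fold_band (A a : Z) : Z := if 0 <=? a then a - A else - a.

Lemma fold_band_range A a : A <= Z.abs a < 2 * A -> 0 <= fold_band A a < 2 * A.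
Proof. unfold fold_band. destruct (Z.leb_spec 0 a); lia. Qed.

Lemma fold_band_inj A a b :
  A <= Z.abs a < 2 * A -> A <= Z.abs b < 2 * A -> fold_band A a = fold_band A b -> a = b.
Proof. unfold fold_band. destruct (Z.leb_spec 0 a), (Z.leb_spec 0 b); lia. Qed.

Lemma fold_band_divide g A a : (g | A) -> (g | a) -> (g | fold_band A a).
Proof.
  intros HA Ha. unfold fold_band. destruct (0 <=? a).
  - apply Z.divide_sub_r; assumption.
  - apply Z.divide_opp_r; assumption.
Qed.

Lemma mul_add_inj g x y q q' :
  0 <= q < g -> 0 <= q' < g -> g * x + q = g * y + q' -> x = y /\ q = q'.
Proof. intros Hq Hq' H. assert (x = y) by nia. split; [assumption | nia]. Qed.

Definition in_band (m l : nat) (r : Z) (t : nat) (j : nat) : bool :=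
  let a := Z.abs (alpha m l r (Z.of_nat j)) in
  (2 ^ (Z.of_nat t - 1) <=? a) && (a <? 2 ^ Z.of_nat t).

Lemma Nmod_pos m l : 0 < Nmod m l.
Proof. apply Z.pow_pos_nonneg; lia. Qed.

Lemma in_band_bounds m l r t j :
  (1 <= t)%nat -> in_band m l r t j = true ->
  2 ^ (Z.of_nat t - 1) <= Z.abs (alpha m l r (Z.of_nat j)) < 2 * 2 ^ (Z.of_nat t - 1).
Proof.
  intros Ht Hj. unfold in_band in Hj.
  apply andb_prop in Hj as [Hlo Hhi]. apply Z.leb_le in Hlo. apply Z.ltb_lt in Hhi.
  rewrite <- Z.pow_succ_r by lia. replace (Z.succ (Z.of_nat t - 1)) with (Z.of_nat t) by lia.
  lia.
Qed.

Lemma in_band_count m l r t :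
  (1 <= t)%nat ->
  (length (filter (in_band m l r t) (seq 0 (Z.to_nat (Nmod m l)))) <= 2 ^ t)%nat.
Proof.
  intros Ht.
  set (N := Nmod m l). assert (HN : 0 < N) by apply Nmod_pos.
  assert (Hg := gcd_pos_r r N HN).
  set (g := Z.gcd r N) in *. set (M := N / g). set (A := 2 ^ (Z.of_nat t - 1)).
  assert (HNgM : N = g * M)
    by (apply Z.div_exact; [lia | apply Z.mod_divide; [lia | apply Z.gcd_divide_r]]).
  assert (Hdiv : forall j, (g | alpha m l r (Z.of_nat j))) by (intros; apply gcd_divide_symmod_mul).
  assert (HgA : forall j, in_band m l r t j = true -> (g | A)).
  { intros j Hj. assert (Hb := in_band_bounds m l r t j Ht Hj).
    apply (divide_pow2_of_divide g (alpha m l r (Z.of_nat j)) (m + l));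
      [lia | apply Z.gcd_divide_r | apply Hdiv | | lia |].
    - assert (0 < A) by (apply Z.pow_pos_nonneg; lia). lia.
    - rewrite Z.pow_add_r by lia. fold A. lia. }
  assert (Hquot : forall j : nat, (j < Z.to_nat N)%nat -> 0 <= Z.of_nat j / M < g).
  { intros j Hj. split; [apply Z.div_pos; nia|]. apply Z.div_lt_upper_bound; nia. }
  (* [j] is encoded by its folded [alpha], a multiple of [g], plus its block index [j / M < g]. *)
  apply (length_filter_le_of_inj _ _ _
           (fun j => Z.to_nat (fold_band A (alpha m l r (Z.of_nat j)) + Z.of_nat j / M))).
  - intros j Hj Hbj. assert (Hf := fold_band_range _ _ (in_band_bounds m l r t j Ht Hbj)).
    fold A in Hf. specialize (Hquot j Hj). assert (HgAj := HgA j Hbj).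
    destruct (fold_band_divide g A _ HgAj (Hdiv j)) as [u Hu]. destruct HgAj as [h Hh].
    apply Nat2Z.inj_lt. rewrite Z2Nat.id, Nat2Z.inj_pow by lia.
    replace (Z.of_nat t) with (Z.of_nat t - 1 + 1)%Z by lia. rewrite Z.pow_add_r by lia. fold A.
    assert (u < 2 * h) by nia. nia.
  - intros j k Hj Hk Hbj Hbk Heq.
    assert (Hrj := in_band_bounds m l r t j Ht Hbj). assert (Hrk := in_band_bounds m l r t k Ht Hbk).
    fold A in Hrj, Hrk.
    assert (Hqj := Hquot j Hj). assert (Hqk := Hquot k Hk).
    assert (Hfj := fold_band_range _ _ Hrj). assert (Hfk := fold_band_range _ _ Hrk).
    destruct (fold_band_divide g A _ (HgA j Hbj) (Hdiv j)) as [uj Huj].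
    destruct (fold_band_divide g A _ (HgA j Hbj) (Hdiv k)) as [uk Huk].
    apply Z2Nat.inj in Heq; [|lia|lia].
    rewrite Huj, Huk, !(Z.mul_comm _ g) in Heq.
    destruct (mul_add_inj g uj uk _ _ Hqj Hqk Heq) as [Hu Hq].
    assert (Ha : alpha m l r (Z.of_nat j) = alpha m l r (Z.of_nat k))
      by (apply (fold_band_inj A); [exact Hrj | exact Hrk | lia]).
    apply Nat2Z.inj, (mul_cong_div_inj r N); [exact HN | | exact Hq].
    unfold alpha in Ha. fold N in Ha. rewrite !symmod_eq in Ha by lia.
    exists ((r * Z.of_nat j + N / 2) / N - (r * Z.of_nat k + N / 2) / N). lia.
Qed.

Open Scope R_scope.

Lemma rsum_le (f g : nat -> R) n :
  (forall j, (j < n)%nat -> f j <= g j) -> rsum f n <= rsum g n.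
Proof.
  induction n as [|n IH]; simpl; intros Hfg; [lra|].
  assert (f n <= g n) by (apply Hfg; lia).
  assert (rsum f n <= rsum g n) by (apply IH; intros; apply Hfg; lia).
  lra.
Qed.

Lemma rsum_indicator (P : nat -> bool) c n :
  rsum (fun j => if P j then c else 0) n = c * INR (length (filter P (seq 0 n))).
Proof.
  induction n as [|n IH]; [simpl; ring|].
  rewrite seq_S, filter_app, length_app; simpl rsum; rewrite IH; simpl.
  destruct (P n); simpl; rewrite ?plus_INR; simpl; ring.
Qed.

Lemma geomsq_le_sq th n : geomsq th n <= INR n ^ 2.
Proof.
  unfold geomsq. induction n as [|n IH]; [simpl; lra|].
  simpl rsum.
  set (C := rsum (fun b => cos (th * INR b)) n) in *.
  set (S := rsum (fun b => sin (th * INR b)) n) in *.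
  set (c := cos (th * INR n)). set (s := sin (th * INR n)).
  assert (Hcs : c ^ 2 + s ^ 2 = 1)
    by (unfold c, s; rewrite <- (sin2_cos2 (th * INR n)); unfold Rsqr; lra).
  (* The new term has unit length, so it adds at most its projection on the old sum. *)
  assert (Hproj : (C * c + S * s) ^ 2 + (C * s - S * c) ^ 2 = (C ^ 2 + S ^ 2) * (c ^ 2 + s ^ 2))
    by ring.
  assert (0 <= (C * s - S * c) ^ 2) by apply pow2_ge_0.
  assert (0 <= INR n) by apply pos_INR.
  assert (C * c + S * s <= INR n) by nra.
  rewrite S_INR. nra.
Qed.

Lemma geomsq_mul_sin_sq_le th n : geomsq th n * sin (th / 2) ^ 2 <= 1.
Proof.
  set (x := th / 2). replace th with (2 * x) by (unfold x; field).
  (* Telescoping: [2 sin x cos (2 x b) = sin ((2b+1) x) - sin ((2b-1) x)], likewise for [sin]. *)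
  assert (Htel : forall n, 2 * sin x * rsum (fun b => cos (2 * x * INR b)) n
                             = sin (2 * x * INR n - x) + sin x
                        /\ 2 * sin x * rsum (fun b => sin (2 * x * INR b)) n
                             = cos x - cos (2 * x * INR n - x)).
  { induction n0 as [|k [IHc IHs]].
    - simpl. replace (2 * x * 0 - x) with (- x) by ring. rewrite sin_neg, cos_neg. lra.
    - simpl rsum. rewrite S_INR.
      replace (2 * x * (INR k + 1) - x) with (2 * x * INR k + x) by ring.
      rewrite !Rmult_plus_distr_l, IHc, IHs.
      rewrite !sin_plus, !sin_minus, !cos_plus, !cos_minus. split; ring. }
  destruct (Htel n) as [Hc Hs]. unfold geomsq.
  set (C := rsum (fun b => cos (2 * x * INR b)) n) in *.
  set (S := rsum (fun b => sin (2 * x * INR b)) n) in *.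
  set (u := 2 * x * INR n - x) in *.
  assert (Hu := sin2_cos2 u). assert (Hx := sin2_cos2 x). unfold Rsqr in *.
  assert (4 * ((C ^ 2 + S ^ 2) * sin x ^ 2) = (sin u + sin x) ^ 2 + (cos x - cos u) ^ 2)
    by (rewrite <- Hc, <- Hs; ring).
  assert (0 <= (sin u - sin x) ^ 2) by apply pow2_ge_0.
  assert (0 <= (cos x + cos u) ^ 2) by apply pow2_ge_0.
  nra.
Qed.

Lemma sin_ge_jordan x : 0 <= x <= PI / 2 -> 2 * x / PI <= sin x.
Proof.
  intros Hx. assert (Hpi4 := PI_4). assert (Hpi3 := PI2_3_2).
  destruct (Rle_lt_dec x (PI / 4)) as [Hsmall|Hlarge].
  - destruct (SIN x ltac:(lra) ltac:(lra)) as [Hlb _].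
    replace (sin_lb x) with (x - x ^ 3 / 6 + x ^ 5 / 120 - x ^ 7 / 5040) in Hlb
      by (unfold sin_lb, sin_approx, sin_term; simpl; field).
    assert (x ^ 2 <= 1) by nra.
    assert (0 <= x ^ 5) by (apply pow_le; lra).
    assert (x ^ 7 <= x ^ 5) by (replace (x ^ 7) with (x ^ 5 * x ^ 2) by ring; nra).
    assert (x ^ 3 <= x) by (replace (x ^ 3) with (x * x ^ 2) by ring; nra).
    assert (5 / 6 * x <= sin x) by lra.
    apply (Rmult_le_reg_r PI); [lra|]. field_simplify; [|lra]. nra.
  - set (y := PI / 2 - x).
    replace (sin x) with (cos y) by (unfold y; rewrite cos_shift; reflexivity).
    destruct (COS y ltac:(unfold y; lra) ltac:(unfold y; lra)) as [Hlb _].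
    replace (cos_lb y) with (1 - y ^ 2 / 2 + y ^ 4 / 24 - y ^ 6 / 720) in Hlb
      by (unfold cos_lb, cos_approx, cos_term; simpl; field).
    assert (0 <= y <= 1) by (unfold y; lra).
    assert (y ^ 2 <= 1) by nra.
    assert (0 <= y ^ 4) by (apply pow_le; lra).
    assert (y ^ 6 <= y ^ 4) by (replace (y ^ 6) with (y ^ 4 * y ^ 2) by ring; nra).
    assert (1 - y ^ 2 / 2 <= cos y) by lra.
    replace x with (PI / 2 - y) by (unfold y; ring).
    apply (Rmult_le_reg_r PI); [lra|]. field_simplify; [|lra]. nra.
Qed.

Lemma sin_sq_ge_jordan x : Rabs x <= PI / 2 -> (2 * x / PI) ^ 2 <= sin x ^ 2.
Proof.
  intros Hx. assert (Hpi := PI_RGT_0).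
  destruct (Rle_or_lt 0 x) as [Hpos|Hneg].
  - rewrite Rabs_pos_eq in Hx by lra.
    assert (0 <= 2 * x / PI) by (apply Rmult_le_pos; [lra | left; apply Rinv_0_lt_compat; lra]).
    assert (Hj := sin_ge_jordan x ltac:(lra)). nra.
  - rewrite Rabs_left in Hx by lra.
    assert (0 <= 2 * - x / PI) by (apply Rmult_le_pos; [lra | left; apply Rinv_0_lt_compat; lra]).
    assert (Hj := sin_ge_jordan (- x) ltac:(lra)). rewrite sin_neg in Hj.
    replace (2 * x / PI) with (- (2 * - x / PI)) by (field; lra). nra.
Qed.

Lemma geomsq_le_jordan th n : th <> 0 -> Rabs th <= PI -> geomsq th n <= (PI / th) ^ 2.
Proof.
  intros Hth Habs. assert (Hpi := PI_RGT_0).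
  assert (Hhalf : Rabs (th / 2) <= PI / 2)
    by (unfold Rabs in *; destruct (Rcase_abs th), (Rcase_abs (th / 2)); lra).
  assert (Hs := sin_sq_ge_jordan (th / 2) Hhalf).
  replace (2 * (th / 2) / PI) with (th / PI) in Hs by (field; lra).
  assert (Hpos : 0 < (th / PI) ^ 2).
  { assert (th / PI <> 0) by (unfold Rdiv; apply Rmult_integral_contrapositive; split;
                               [lra | apply Rinv_neq_0_compat; lra]).
    replace ((th / PI) ^ 2) with (Rsqr (th / PI)) by (unfold Rsqr; ring).
    apply Rlt_0_sqr. assumption. }
  assert (Hg := geomsq_mul_sin_sq_le th n).
  assert (0 <= geomsq th n) by (unfold geomsq; nra).
  replace ((PI / th) ^ 2) with (/ (th / PI) ^ 2) by (field; lra).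
  apply (Rmult_le_reg_r ((th / PI) ^ 2)); [exact Hpos|].
  rewrite Rinv_l by lra. nra.
Qed.

Definition phase (m l : nat) (r : Z) (j : nat) : R :=
  2 * PI * IZR (alpha m l r (Z.of_nat j)) / IZR (Nmod m l).

Lemma prob_le (m l : nat) (r : Z) (j : nat) (B : R) :
  (0 < r)%Z ->
  geomsq (phase m l r j) (Z.to_nat (Lq m l r) + 1) <= B ->
  geomsq (phase m l r j) (Z.to_nat (Lq m l r)) <= B ->
  prob m l r j <= IZR r * B / IZR (Nmod m l) ^ 2.
Proof.
  intros Hr HB1 HB0.
  change (prob m l r j) with
    (IZR (beta m l r) / IZR (Nmod m l) ^ 2 * geomsq (phase m l r j) (Z.to_nat (Lq m l r) + 1) +
     IZR (r - beta m l r) / IZR (Nmod m l) ^ 2 * geomsq (phase m l r j) (Z.to_nat (Lq m l r))).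
  assert (HN : 0 < IZR (Nmod m l)) by (apply IZR_lt, Nmod_pos).
  assert (Hbeta := Z.mod_pos_bound (Nmod m l) r Hr). fold (beta m l r) in Hbeta.
  assert (0 <= IZR (beta m l r)) by (apply IZR_le; lia).
  assert (0 <= IZR (r - beta m l r)) by (apply IZR_le; lia).
  rewrite minus_IZR in *.
  apply (Rmult_le_reg_r (IZR (Nmod m l) ^ 2)); [apply pow_lt; lra|].
  field_simplify; [|lra|lra]. nra.
Qed.

Lemma prob_le_inv (m l : nat) (r : Z) (j : nat) :
  (0 < r <= Nmod m l)%Z -> prob m l r j <= 4 / IZR r.
Proof.
  intros Hr. set (L := Z.to_nat (Lq m l r)).
  assert (HL : (r * Lq m l r <= Nmod m l)%Z) by (apply Z.mul_div_le; lia).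
  assert (HL0 : (0 <= Lq m l r)%Z) by (apply Z.div_pos; lia).
  assert (HLR : INR L = IZR (Lq m l r)) by (unfold L; rewrite INR_IZR_INZ, Z2Nat.id; auto).
  assert (HL1 : IZR r * (INR L + 1) <= 2 * IZR (Nmod m l)).
  { rewrite HLR, <- mult_IZR, <- plus_IZR, <- mult_IZR. apply IZR_le. nia. }
  assert (Hrpos : 0 < IZR r) by (apply IZR_lt; lia).
  assert (HN : 0 < IZR (Nmod m l)) by (apply IZR_lt, Nmod_pos).
  assert (0 <= INR L) by apply pos_INR.
  eapply Rle_trans.
  { apply (prob_le _ _ _ _ ((INR L + 1) ^ 2)); [lia| |].
    - fold L. rewrite <- S_INR, Nat.add_1_r. apply geomsq_le_sq.
    - fold L. eapply Rle_trans; [apply geomsq_le_sq | nra]. }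
  apply (Rmult_le_reg_r (IZR (Nmod m l) ^ 2 * IZR r)); [apply Rmult_lt_0_compat; [apply pow_lt|]; lra|].
  field_simplify; [|lra|lra].
  assert (0 <= IZR r * (INR L + 1)) by nra. nra.
Qed.

Lemma prob_le_alpha (m l : nat) (r : Z) (j : nat) :
  (0 < r)%Z -> alpha m l r (Z.of_nat j) <> 0%Z ->
  prob m l r j <= IZR r / (4 * IZR (alpha m l r (Z.of_nat j)) ^ 2).
Proof.
  intros Hr Ha. set (a := IZR (alpha m l r (Z.of_nat j))).
  assert (HN : 0 < IZR (Nmod m l)) by (apply IZR_lt, Nmod_pos).
  assert (Hpi := PI_RGT_0).
  assert (Ha0 : a <> 0) by (apply not_0_IZR; exact Ha).
  assert (Habs : 2 * Rabs a <= IZR (Nmod m l)).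
  { unfold a. rewrite <- abs_IZR, <- mult_IZR. apply IZR_le.
    assert (Hb := symmod_abs_le (r * Z.of_nat j) (Nmod m l) (Nmod_pos m l)).
    assert (Hd := Z.mul_div_le (Nmod m l) 2 ltac:(lia)). unfold alpha. lia. }
  assert (Hphase : Rabs (phase m l r j) <= PI).
  { assert (- IZR (Nmod m l) <= 2 * a <= IZR (Nmod m l))
      by (unfold Rabs in Habs; destruct (Rcase_abs a); lra).
    unfold phase. fold a. apply Rabs_le.
    split; apply (Rmult_le_reg_r (IZR (Nmod m l))); try lra; field_simplify; nra. }
  assert (Hne : phase m l r j <> 0).
  { unfold phase, Rdiv. fold a.
    apply Rmult_integral_contrapositive_currified; [|apply Rinv_neq_0_compat; lra].
    apply Rmult_integral_contrapositive_currified; lra. }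
  assert (HB : (PI / phase m l r j) ^ 2 = IZR (Nmod m l) ^ 2 / (4 * a ^ 2))
    by (unfold phase; fold a; field; lra).
  eapply Rle_trans.
  { apply (prob_le _ _ _ _ ((PI / phase m l r j) ^ 2)); [exact Hr | |];
      apply geomsq_le_jordan; assumption. }
  rewrite HB. right. field. split; lra.
Qed.

Lemma rho_le_of_prob_le (m l : nat) (r : Z) (t : nat) (C : R) :
  (1 <= t)%nat -> 0 <= C ->
  (forall j, in_band m l r t j = true -> prob m l r j <= C) ->
  rho m l r t <= C * 2 ^ t.
Proof.
  intros Ht HC Hprob.
  change (rho m l r t) with
    (rsum (fun j => if in_band m l r t j then prob m l r j else 0) (Z.to_nat (Nmod m l))).
  eapply Rle_trans.
  { apply (rsum_le _ (fun j => if in_band m l r t j then C else 0)).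
    intros j _. destruct (in_band m l r t j) eqn:Hj; [apply Hprob; exact Hj | lra]. }
  rewrite rsum_indicator. apply Rmult_le_compat_l; [exact HC|].
  rewrite <- (pow_INR 2). apply le_INR, in_band_count, Ht.
Qed.

Lemma rho_le_div_pow2 (m l : nat) (r : Z) (t : nat) :
  (0 < r)%Z -> (1 <= t)%nat -> rho m l r t <= IZR r / 2 ^ t.
Proof.
  intros Hr Ht. set (A := 2 ^ (t - 1)).
  assert (HA : 0 < A) by (apply pow_lt; lra).
  assert (HtA : 2 ^ t = 2 * A) by (unfold A; replace t with (S (t - 1)) at 1 by lia; reflexivity).
  assert (Hrpos : 0 < IZR r) by (apply IZR_lt; exact Hr).
  eapply Rle_trans.
  { apply (rho_le_of_prob_le _ _ _ _ (IZR r / (4 * A ^ 2))); [exact Ht | |].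
    - apply Rmult_le_pos; [lra | left; apply Rinv_0_lt_compat; nra].
    - intros j Hj. destruct (in_band_bounds m l r t j Ht Hj) as [Hlo _].
      replace (Z.of_nat t - 1)%Z with (Z.of_nat (t - 1)) in Hlo by lia.
      apply IZR_le in Hlo. rewrite <- pow_IZR, abs_IZR in Hlo. fold A in Hlo.
      set (a := alpha m l r (Z.of_nat j)) in *.
      assert (Ha : a <> 0%Z) by (intros H0; rewrite H0, Rabs_R0 in Hlo; lra).
      eapply Rle_trans; [apply prob_le_alpha; assumption|].
      assert (Hsq : A ^ 2 <= IZR a ^ 2)
        by (rewrite <- (pow2_abs (IZR a)); apply pow_incr; lra).
      apply Rmult_le_compat_l; [lra|]. assert (0 < A ^ 2) by (apply pow_lt; lra). fold a. apply Rinv_le_contravar; lra. }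
  rewrite HtA. right. field. lra.
Qed.

Lemma rho_le_pow2_div (m l : nat) (r : Z) (t : nat) :
  (0 < r <= Nmod m l)%Z -> (1 <= t)%nat -> rho m l r t <= 2 ^ (t + 2) / IZR r.
Proof.
  intros Hr Ht.
  assert (Hrpos : 0 < IZR r) by (apply IZR_lt; lia).
  eapply Rle_trans.
  { apply (rho_le_of_prob_le _ _ _ _ (4 / IZR r)); [exact Ht | |].
    - apply Rmult_le_pos; [lra | left; apply Rinv_0_lt_compat; lra].
    - intros j _. apply prob_le_inv, Hr. }
  rewrite pow_add. right. field. lra.
Qed.

Lemma powerRZ_2_sub (a b : nat) : powerRZ 2 (Z.of_nat a - Z.of_nat b) = 2 ^ a / 2 ^ b.
Proof.
  unfold Z.sub. rewrite powerRZ_add, powerRZ_neg', <- !pow_powerRZ by lra. reflexivity.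
Qed.

Theorem mainTheorem16 (m l : nat) (r : Z) :
  (1 <= m)%nat -> (1 <= l)%nat ->
  ((2 <= r < 2 ^ Z.of_nat m)%Z ->
     forall t : nat, (1 <= t)%nat ->
       rho m l r t <= powerRZ 2 (Z.of_nat m - Z.of_nat t)) /\
  ((2 ^ (Z.of_nat m - 1) <= r < 2 ^ Z.of_nat m)%Z -> (2 <= r)%Z ->
     forall t : nat, (1 <= t)%nat ->
       rho m l r t <= Rmin (powerRZ 2 (Z.of_nat m - Z.of_nat t))
                           (powerRZ 2 (Z.of_nat t + 3 - Z.of_nat m))).
Proof.
  intros Hm _.
  assert (Hpow : forall n, IZR (2 ^ Z.of_nat n) = 2 ^ n) by (intros n; rewrite <- pow_IZR; reflexivity).
  assert (Ha : (2 <= r < 2 ^ Z.of_nat m)%Z -> forall t : nat, (1 <= t)%nat ->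
                 rho m l r t <= powerRZ 2 (Z.of_nat m - Z.of_nat t)).
  { intros Hr t Ht. rewrite powerRZ_2_sub.
    eapply Rle_trans; [apply rho_le_div_pow2; [lia | exact Ht]|].
    apply Rmult_le_compat_r; [left; apply Rinv_0_lt_compat, pow_lt; lra|].
    rewrite <- Hpow. apply IZR_le. lia. }
  split; [exact Ha|].
  intros Hr Hr2 t Ht. apply Rmin_glb; [apply Ha; [lia | exact Ht]|].
  assert (HrN : (r <= Nmod m l)%Z).
  { unfold Nmod. enough (2 ^ Z.of_nat m <= 2 ^ Z.of_nat (m + l))%Z by lia.
    apply Z.pow_le_mono_r; lia. }
  assert (H2r : 2 ^ m <= 2 * IZR r).
  { rewrite <- Hpow, <- mult_IZR. apply IZR_le.
    replace (Z.of_nat m) with (Z.succ (Z.of_nat m - 1)) at 1 by lia.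
    rewrite Z.pow_succ_r by lia. lia. }
  replace (Z.of_nat t + 3 - Z.of_nat m)%Z with (Z.of_nat (t + 3) - Z.of_nat m)%Z by lia.
  rewrite powerRZ_2_sub.
  eapply Rle_trans; [apply rho_le_pow2_div; [lia | exact Ht]|].
  assert (0 < 2 ^ m) by (apply pow_lt; lra). assert (0 < 2 ^ t) by (apply pow_lt; lra).
  rewrite !pow_add.
  apply (Rmult_le_reg_r (2 ^ m * IZR r)); [nra|]. field_simplify; nra.
Qed.
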